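(* Let $N\geq1$ and let $r$ be an integer with $-(N-1)\leq r\leq N-1$ and $r\neq\pm(N-2)$. Define $$f^{\mathrm{rnk}}_N(r)=\max\Big\{\sum_{l=1}^{|\Lambda|}N_l^2\ :\ \Lambda\text{ a partition of }\{1,\dots,N\}\text{ with }\max\Lambda-|\Lambda|\leq r\Big\}.$$ Then: (i) if $N+r$ is odd, $f^{\mathrm{rnk}}_N(r)=\frac14(N+r+1)^2+\frac12(N-r-1)$; (ii) if $N+r=10$ and $N\geq 8$, $f^{\mathrm{rnk}}_N(r)=34-r$; (iii) if $N+r=16$ and $N\geq12$, $f^{\mathrm{rnk}}_N(r)=76-r$; (iv) if $N+r$ is even and neither (ii) nor (iii) applies, $f^{\mathrm{rnk}}_N(r)=\frac14(N+r)^2+\frac12(N-r)+2$.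
   Context: A partition $\Lambda=\{A_1,\dots,A_{|\Lambda|}\}$ of $\{1,\dots,N\}$ is a collection of nonempty pairwise disjoint subsets whose union is $\{1,\dots,N\}$; $|\Lambda|$ is the number of subsets, $N_l=|A_l|$, and $\max\Lambda=\max_lN_l$. The quantity $\max\Lambda-|\Lambda|$ is Dyson's rank of the partition; its possible values are the integers from $-(N-1)$ to $N-1$ except $\pm(N-2)$. *)

From mathcomp Require Import all_boot all_order all_algebra.
Set Implicit Arguments. Unset Strict Implicit. Unset Printing Implicit Defensive.
Import Order.TTheory GRing.Theory Num.Theory.

(* The ground set {1,...,N} is represented by 'I_N = {0,...,N-1}.
   A partition Lambda of it is a P : {set {set 'I_N}} with
   partition P [set: 'I_N] (blocks nonempty, pairwise disjoint, covering). *)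

Definition maxblock N (P : {set {set 'I_N}}) : nat := \max_(A in P) #|A|.

Definition dyson_rank N (P : {set {set 'I_N}}) : int :=
  ((maxblock P)%:Z - (#|P|)%:Z)%R.

Definition frnk (N : nat) (r : int) : nat :=
  \max_(P : {set {set 'I_N}} | partition P [set: 'I_N] && (dyson_rank P <= r)%R)
     \sum_(A in P) #|A| ^ 2.

From mathcomp Require Import all_boot all_algebra zify lra.
Import GRing.Theory.
Set Implicit Arguments. Unset Strict Implicit. Unset Printing Implicit Defensive.

(* Write every block size as d + 1.  Then sum_l N_l^2 = N + sum d (d + 1) and
   N - |Lambda| = sum d, so max Lambda - |Lambda| <= r says that the largest
   excess D plus the sum of all excesses is at most the budget u = N + r - 1,
   and f^rnk_N(r) - N is the largest sum of d (d + 1) within that budget.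
   Bounding every other excess by D gives at most (D + 1)(u - D) <= (u + 1)^2 / 4,
   which settles even u.  For odd u one also splits off the second largest
   excess e and uses that d (d + 1) is superadditive on the remaining ones; all
   configurations then stay below the generic value except the two equal blocks
   4, 4 (u = 9) and 6, 6 (u = 15).  One or two large blocks padded with
   singletons attain the bounds. *)

Definition pronic (n : nat) : nat := n * n.+1.

(* frnk N r = N + max_excess N (N + r - 1), see [frnk_eq]. *)
Definition max_excess (N u : nat) : nat :=
  if (u == 9) && (8 <= N) then 24
  else if (u == 15) && (12 <= N) then 60
  else pronic u./2 + 2 * odd u.

Lemma pronicD m n : pronic (m + n) = pronic m + pronic n + 2 * (m * n).
Proof. rewrite /pronic; lia. Qed.

Lemma pronic_half_le_max_excess N u : pronic u./2 + 2 * odd u <= max_excess N u.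
Proof.
rewrite /max_excess; case: ifP => [/andP[/eqP-> _]|_] //.
by case: ifP => [/andP[/eqP-> _]|_].
Qed.

Lemma pronic_add_mul_le D x S : S <= 2 * x -> pronic D + D.+1 * S <= pronic (D + x).
Proof. rewrite /pronic; nia. Qed.

(* The odd budget u = 2 (D + x) + 1 is fully spent: e + s = 2x + 1.  The bound
   (D + 1)(2x + 1) suffices when D <= x^2 - x + 1 and superadditivity when
   2D >= 3x + 5; in between x <= 2 and D <= 5. *)
Lemma odd_budget_rest_le D x e s T :
  e <= D -> e + s = (2 * x).+1 -> T <= e.+1 * (e + s) -> T <= pronic e + pronic s ->
  T <= pronic x + 2 * (D * x) + 2 \/
  [/\ e = D, s = 0 & (x == 1) && (D == 3) || (x == 2) && (D == 5)].
Proof.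
move=> eD es_odd T_le_mul T_le_pronic.
have T_le_D : T <= D.+1 * (2 * x).+1.
  by rewrite -es_odd; apply: leq_trans T_le_mul (leq_mul _ _).
have T_le_S : T <= pronic (2 * x).+1 by rewrite -es_odd pronicD; lia.
case: (leqP (D + x) (x * x).+1) => [D_small|D_big].
  by left; apply: leq_trans T_le_D _; rewrite /pronic; nia.
case: (leqP (x * (3 * x + 5)) (2 * (D * x))) => [D_large|D_medium].
  by left; apply: leq_trans T_le_S _; rewrite /pronic; nia.
have x_gt0 : 0 < x by case: x D_medium {D_big es_odd T_le_D T_le_S}; rewrite ?muln0.
have {}D_medium : 2 * D < 3 * x + 5 by rewrite -(ltn_pmul2l x_gt0); lia.
have [x1|x2] : x = 1 \/ x = 2 by nia.
all: subst x; case: s es_odd T_le_mul T_le_pronic => [|s] es_odd T_le_mul T_le_pronic.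
all: rewrite /pronic in T_le_pronic *.
- by right; split; lia.
- by left; nia.
- by right; split; lia.
- by left; nia.
Qed.

(* D and e are the two largest excesses, s is the sum of the other ones and T
   the sum of d (d + 1) over all but the largest block. *)
Lemma config_pronic_le N u D e s T :
  e <= D -> 2 * D + e + s <= u -> T <= e.+1 * (e + s) -> T <= pronic e + pronic s ->
  (0 < e -> D + e + 2 <= N) -> pronic D + T <= max_excess N u.
Proof.
move=> eD budget T_le_mul T_le_pronic N_ge.
have u_half := odd_double_half u; rewrite -mul2n in u_half.
have [x half_u] : exists x, u./2 = D + x by exists (u./2 - D); lia.
case: (leqP (e + s) (2 * x)) => [es_le|es_gt].
  apply: leq_trans (pronic_half_le_max_excess N u); rewrite half_u.
  have T_le_D : T <= D.+1 * (e + s) by apply: leq_trans T_le_mul (leq_mul _ _).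
  by have := pronic_add_mul_le D es_le; lia.
have [u_odd es_odd] : odd u /\ e + s = (2 * x).+1 by case: (odd u) u_half; lia.
case: (odd_budget_rest_le eD es_odd T_le_mul T_le_pronic) => [T_le|[eD' s0 exc]].
  by apply: leq_trans (pronic_half_le_max_excess N u); rewrite u_odd half_u pronicD; lia.
rewrite /max_excess; case/orP: exc => /andP[/eqP x1 /eqP D3]; subst.
- have -> : u = 9 by lia.
  have -> : 8 <= N by lia.
  by rewrite /= /pronic in T_le_pronic *; lia.
- have -> : u = 15 by lia.
  have -> : 12 <= N by lia.
  by rewrite /= /pronic in T_le_pronic *; lia.
Qed.

Section ExcessFamily.

Variables (I : finType) (d : I -> nat).

Lemma exists_argmax (J : {set I}) :
  J != set0 -> exists2 i, i \in J & {in J, forall j, d j <= d i}.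
Proof. by case/set0Pn => j Jj; case: (arg_maxnP d Jj) => i; exists i. Qed.

Lemma sum_pronic_le_mul (J : {set I}) M :
  {in J, forall i, d i <= M} -> \sum_(i in J) pronic (d i) <= M.+1 * \sum_(i in J) d i.
Proof.
move=> dM; rewrite big_distrr; apply: leq_sum => i /dM d_le.
by rewrite /pronic mulnC; apply: leq_mul.
Qed.

Lemma sum_pronic_le_pronic_sum (J : {set I}) :
  \sum_(i in J) pronic (d i) <= pronic (\sum_(i in J) d i).
Proof. by elim/big_rec2: _ => // i a b _ IH; rewrite pronicD; lia. Qed.

Lemma sum_pronic_le_max_excess N u (J : {set I}) i0 :
  i0 \in J -> {in J, forall i, d i <= d i0} ->
  d i0 + \sum_(i in J) d i <= u -> \sum_(i in J) (d i).+1 <= N ->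
  \sum_(i in J) pronic (d i) <= max_excess N u.
Proof.
move=> Ji0 d_max budget N_ge.
rewrite (big_setD1 i0) //= in budget; rewrite (big_setD1 i0) //= in N_ge.
rewrite (big_setD1 i0) //=.
have [J'0|] := eqVneq (J :\ i0) set0.
  rewrite J'0 !big_set0 in budget *.
  by apply: (@config_pronic_le N u (d i0) 0 0 0) => //; lia.
case/exists_argmax => i1 J'i1 d_max1.
have Ji1 : i1 \in J by move: J'i1; rewrite inE => /andP[].
rewrite (big_setD1 i1) //= in budget; rewrite (big_setD1 i1) //= in N_ge.
apply: (@config_pronic_le N u (d i0) (d i1) (\sum_(i in J :\ i0 :\ i1) d i)).
- exact: d_max.
- lia.
- by rewrite -big_setD1 //; apply: sum_pronic_le_mul.
- by rewrite (big_setD1 i1) //= leq_add2l sum_pronic_le_pronic_sum.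
- lia.
Qed.

End ExcessFamily.

Lemma partition_sum_sq_le N u (P : {set {set 'I_N}}) :
  partition P [set: 'I_N] -> maxblock P + N <= #|P| + u.+1 ->
  \sum_(A in P) #|A| ^ 2 <= N + max_excess N u.
Proof.
move=> partP rank_le.
have cardP : \sum_(A in P) #|A| = N.
  by rewrite -(card_partition partP) cardsT card_ord.
have [->|] := eqVneq P set0; first by rewrite big_set0.
pose d (A : {set 'I_N}) := #|A|.-1.
have sizeE : {in P, forall A : {set 'I_N}, #|A| = (d A).+1}.
  by move=> A PA; rewrite prednK // card_gt0 (partition_neq0 partP PA).
case/(exists_argmax d) => A0 PA0 d_max.
have maxE : maxblock P = #|A0|.
  apply/eqP; rewrite eqn_leq (leq_bigmax_cond _ PA0) andbT.
  by apply/bigmax_leqP => A PA; rewrite !sizeE // ltnS d_max.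
have sumE : \sum_(A in P) (d A).+1 = N.
  by apply: etrans cardP; apply: eq_bigr => A /sizeE ->.
have sqE : \sum_(A in P) #|A| ^ 2 = \sum_(A in P) #|A| + \sum_(A in P) pronic (d A).
  by rewrite -big_split; apply: eq_bigr => A /sizeE ->; rewrite /pronic expnS expn1 mulSn.
have countE : \sum_(A in P) (d A).+1 = #|P| + \sum_(A in P) d A.
  by rewrite -sum1_card -big_split; apply: eq_bigr.
have budget : d A0 + \sum_(A in P) d A <= u.
  by move: rank_le; rewrite maxE (sizeE A0 PA0); lia.
by rewrite sqE cardP leq_add2l (sum_pronic_le_max_excess PA0 d_max budget) ?sumE.
Qed.

Lemma exists_subset_card (T : finType) (D : {set T}) n :
  n <= #|D| -> exists2 A : {set T}, A \subset D & #|A| = n.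
Proof.
move=> nD; exists [set x in take n (enum D)].
  by apply/subsetP => x; rewrite inE => /mem_take; rewrite mem_enum.
rewrite cardsE (card_uniqP _) ?take_uniq ?enum_uniq // size_take -cardE.
by case: ltngtP nD => // ->.
Qed.

Lemma partition_of_sizes (T : finType) (D : {set T}) (ns : seq nat) :
  all (leq 1) ns -> sumn ns = #|D| ->
  exists2 P : {set {set T}}, partition P D & perm_eq [seq #|A| | A : {set T} <- enum P] ns.
Proof.
elim: ns D => [|n ns IH] D /=.
  move=> _ /esym/cards0_eq ->; exists set0; last by rewrite enum_set0.
  by rewrite partition_set0.
case/andP=> n_gt0 ns_gt0 sumD.
have [A AD cardA] := exists_subset_card (leq_trans (leq_addr _ _) (eq_leq sumD) : n <= #|D|).
have [|P' partP' permP'] := IH (D :\: A) ns_gt0.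
  by rewrite cardsDS // cardA -sumD addKn.
have A_neq0 : A != set0 by rewrite -card_gt0 cardA.
have disjA : [disjoint A & D :\: A].
  by rewrite disjoint_sym; have /subsetDP[] := subxx (D :\: A).
have AP' : A \notin P'.
  apply: contraTN (subsetC_disjoint disjA A_neq0 (subxx A)) => AP'.
  by rewrite negbK -(cover_partition partP') /cover; apply: (bigcup_sup A AP').
exists (A |: P').
  have := partitionU1 partP' A_neq0 disjA.
  congr (partition _ _); apply/setP => x; rewrite !inE.
  by case: (boolP (x \in A)) => // /(subsetP AD).
have permA : perm_eq (enum (A |: P')) (A :: enum P').
  apply: uniq_perm; rewrite /= ?mem_enum ?enum_uniq ?AP' // => B.
  by rewrite mem_enum !inE mem_enum.
by apply: perm_trans (perm_map _ permA) _; rewrite /= cardA perm_cons.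
Qed.

Lemma frnk_le N r B :
  (forall P : {set {set 'I_N}}, partition P [set: 'I_N] -> (dyson_rank P <= r)%R ->
     \sum_(A in P) #|A| ^ 2 <= B) ->
  frnk N r <= B.
Proof. by move=> HB; apply/bigmax_leqP => P /andP[]; apply: HB. Qed.

Lemma frnk_ge_sizes N r m ns :
  all (leq 1) ns -> sumn ns = N -> all (leq^~ m) ns -> (m%:Z - (size ns)%:Z <= r)%R ->
  sumn [seq n ^ 2 | n <- ns] <= frnk N r.
Proof.
move=> ns_gt0 sumN ns_le rank_le.
have [|P partP permP] := partition_of_sizes (D := [set: 'I_N]) ns_gt0.
  by rewrite cardsT card_ord.
have maxP : maxblock P <= m.
  apply/bigmax_leqP => A PA; apply: (allP ns_le).
  by rewrite -(perm_mem permP) map_f ?mem_enum.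
have cardP : #|P| = size ns by rewrite cardE -(perm_size permP) size_map.
have sqP : \sum_(A in P) #|A| ^ 2 = sumn [seq n ^ 2 | n <- ns].
  by rewrite sumnE big_map -(perm_big _ permP) big_map big_enum.
rewrite -sqP; apply: (leq_bigmax_cond P); rewrite partP /dyson_rank cardP /=.
by lia.
Qed.

Lemma frnk_ge_blocks N r m bs :
  all (leq 1) bs -> sumn bs <= N -> all (leq^~ m) bs -> 0 < m ->
  (m%:Z - (size bs + (N - sumn bs))%:Z <= r)%R ->
  sumn [seq b ^ 2 | b <- bs] + (N - sumn bs) <= frnk N r.
Proof.
move=> bs_gt0 bsN bs_le m_gt0 rank_le.
have := @frnk_ge_sizes N r m (bs ++ nseq (N - sumn bs) 1).
rewrite !all_cat !all_nseq bs_gt0 bs_le m_gt0 !orbT map_cat map_nseq.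
rewrite !sumn_cat !sumn_nseq size_cat size_nseq !mul1n.
by apply=> //; rewrite subnKC.
Qed.

Lemma frnk_eq N r u :
  (u%:Z = N%:Z + r - 1)%R -> u.+2 <= 2 * N -> u != 1 -> u.+3 != 2 * N ->
  frnk N r = N + max_excess N u.
Proof.
move=> uE u_le u_neq1 u_neq.
apply/eqP; rewrite eqn_leq; apply/andP; split.
  apply: frnk_le => P partP rankP; apply: partition_sum_sq_le => //.
  by move: rankP; rewrite /dyson_rank; lia.
have u_half := odd_double_half u.
rewrite /max_excess; case: ifP => [/andP[/eqP u9 N8]|_].
  by apply: leq_trans (@frnk_ge_blocks N r 4 [:: 4; 4] _ _ _ _ _) => //=; lia.
case: ifP => [/andP[/eqP u15 N12]|_].
  by apply: leq_trans (@frnk_ge_blocks N r 6 [:: 6; 6] _ _ _ _ _) => //=; lia.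
rewrite /pronic; case: (boolP (odd u)) => [u_odd|u_even] /=.
  have w_lt : u./2 + 3 <= N by lia.
  by apply: leq_trans (@frnk_ge_blocks N r u./2.+1 [:: u./2.+1; 2] _ _ _ _ _) => /=; lia.
have w_lt : u./2 < N by lia.
by apply: leq_trans (@frnk_ge_blocks N r u./2.+1 [:: u./2.+1] _ _ _ _ _) => /=; lia.
Qed.

Local Open Scope ring_scope.

Lemma intr_quarter_eq (x a b c : int) :
  4 * x = a ^+ 2 + 2 * b + 4 * c ->
  x%:~R = a%:~R ^+ 2 / 4 + b%:~R / 2 + c%:~R :> rat.
Proof. by move=> /(congr1 (intr : int -> rat)); rewrite !rmorphD !rmorphM /= !pmulrn; lra. Qed.

Theorem lemma3 (N : nat) (r : int) :
  (1 <= N)%N ->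
  - (N%:Z - 1) <= r -> r <= N%:Z - 1 ->
  r != N%:Z - 2 -> r != - (N%:Z - 2) ->
  [/\ (~~ (2 %| N%:Z + r)%Z ->
        (frnk N r)%:Q = ((N%:Z + r + 1)%:~R ^+ 2) / 4 + (N%:Z - r - 1)%:~R / 2),
      (N%:Z + r = 10 -> (8 <= N)%N -> (frnk N r)%:Z = 34 - r),
      (N%:Z + r = 16 -> (12 <= N)%N -> (frnk N r)%:Z = 76 - r)
    & ((2 %| N%:Z + r)%Z ->
        ~ (N%:Z + r = 10 /\ (8 <= N)%N) ->
        ~ (N%:Z + r = 16 /\ (12 <= N)%N) ->
        (frnk N r)%:Q = ((N%:Z + r)%:~R ^+ 2) / 4 + (N%:Z - r)%:~R / 2 + 2)].
Proof.
move=> _ r_ge r_le /eqP r_neq /eqP r_neq'.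
have [u uE] : exists u : nat, u%:Z = N%:Z + r - 1.
  by exists (absz (N%:Z + r - 1)%R); lia.
have frnkE : frnk N r = (N + max_excess N u)%N by apply: frnk_eq; lia.
have parityE : (2 %| N%:Z + r)%Z = odd u.
  by rewrite (_ : N%:Z + r = u.+1) ?dvdzE ?dvdn2 ?negbK //; lia.
have u_half := odd_double_half u.
rewrite parityE; split.
- move=> u_even; have {}frnkE : frnk N r = (N + pronic u./2)%N.
    have [u9 u15] : u != 9%N /\ u != 15%N by split; apply: contraNneq u_even => ->.
    by rewrite frnkE /max_excess (negbTE u9) (negbTE u15) (negbTE u_even) /= addn0.
  have := @intr_quarter_eq (frnk N r) (N%:Z + r + 1) (N%:Z - r - 1) 0.
  rewrite mulr0z !addr0; apply; rewrite frnkE /pronic.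
  by rewrite (_ : N%:Z + r + 1 = (2 * u./2 + 2)%N); lia.
- by move=> sum10 N_ge; rewrite frnkE /max_excess ifT; lia.
- by move=> sum16 N_ge; rewrite frnkE /max_excess ifF ?ifT; lia.
- move=> u_odd not10 not16; have {}frnkE : frnk N r = (N + pronic u./2 + 2)%N.
    by rewrite frnkE /max_excess u_odd !ifF; lia.
  apply: (@intr_quarter_eq _ _ _ 2); rewrite frnkE /pronic.
  by rewrite (_ : N%:Z + r = (2 * u./2 + 2)%N); lia.
Qed.
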